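(* For every code $u\in\mathrm{PR}_X$ and every $x\in X_\bot$, writing $e(u,x) = (e_{\mathrm{map}}(u,x), e_{\mathrm{arg}}(u,x))$: (1) if $c(u) > 0$ then $c(e_{\mathrm{map}}(u,x)) < c(u)$ in $\mathbb{N}[\omega]$; (2) $c(u) = 0$ if and only if $u = \mathrm{id}$, and in that case $e(u,x) = (u,x)$.
   Context: Universe: $X$ is the smallest set containing the numerals $\nu(n)$ ($n\in\mathbb{N}$) and closed under forming pairs $\langle x;y\rangle$ ($x,y\in X$); $X_\bot = X\cup\{\bot\}$. Codes $\mathrm{PR}_X$: the formal terms generated from the basic symbols $\mathrm{bas}=\{\mathrm{id},\mathring 0,\mathring{\mathrm s},\mathring\Pi,\mathring\Delta,\mathring\ell,\mathring{\mathrm r}\}$ by internal composition $\langle v\odot u\rangle$, internal induced $\langle u;v\rangle$, internal product $\langle u\# v\rangle$ and internal iteration $u^{\$}$. Basic symbols act on $X_\bot$: $\mathrm{id}(x)=x$; $\mathring 0(x)=\nu(0)$; $\mathring{\mathrm s}(\nu(n))=\nu(n+1)$; $\mathring\Pi(x)=\nu(0)$; $\mathring\Delta(x)=\langle x;x\rangle$; $\mathring\ell\langle x;y\rangle = x$, $\mathring{\mathrm r}\langle x;y\rangle = y$; in all other cases (and on $\bot$, except for $\mathrm{id}$) the value is $\bot$. Code expansion: $u^{[0]}=\mathrm{id}$, $u^{[n+1]}=\langle u\odot u^{[n]}\rangle$. Evaluation step $e:\mathrm{PR}_X\times X_\bot\to\mathrm{PR}_X\times X_\bot$, defined by recursion on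 the term structure, taking the first applicable case: (a) $u=\mathrm{ba}\in\mathrm{bas}$: $e(\mathrm{ba},x)=(\mathrm{id},\mathrm{ba}(x))$; (b) $e(\langle v\odot\mathrm{ba}\rangle,x) = (v,\mathrm{ba}(x))$ for $\mathrm{ba}\in\mathrm{bas}$; (c) for $u\notin\mathrm{bas}$: $e(\langle v\odot u\rangle,x) = (\langle v\odot e_{\mathrm{map}}(u,x)\rangle, e_{\mathrm{arg}}(u,x))$; (d) $e(\langle\mathrm{id}\#\mathrm{id}\rangle,\langle y;z\rangle) = (\mathrm{id},\langle y;z\rangle)$; (e) otherwise $e(\langle u\# v\rangle,\langle y;z\rangle) = (\langle e_{\mathrm{map}}(u,y)\# e_{\mathrm{map}}(v,z)\rangle,\langle e_{\mathrm{arg}}(u,y);e_{\mathrm{arg}}(v,z)\rangle)$; (f) $e(\langle\mathrm{id};\mathrm{id}\rangle,z) = (\mathrm{id},\langle z;z\rangle)$ for $z\in X$; (g) otherwise $e(\langle u;v\rangle,z) = (\langle e_{\mathrm{map}}(u,z);e_{\mathrm{map}}(v,z)\rangle,\langle e_{\mathrm{arg}}(u,z);e_{\mathrm{arg}}(v,z)\rangle)$ for $z\in X$; (h) $e(u^{\$},\langle y;\nu(n)\rangle) = (u^{[n]},y)$; (i) in all remaining cases $e(u,x)=(\mathrm{id},\bot)$. Complexity $c:\mathrm{PR}_X\to\mathbb{N}[\omega]$ (polynomials in $\omega$ with natural-number coefficients): $c(\mathrm{id})=0$; $c(\mathrm{ba})=1$ for the other basic symbols; $c\langle v\odot u\rangle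 = c\langle u\#v\rangle = c\langle u;v\rangle = c(u)+c(v)+1$; $c(u^{\$}) = (c(u)+1)\cdot\omega$. $\mathbb{N}[\omega]$ is ordered lexicographically with priority to higher powers: $p<q$ iff $p\ne q$ and at the highest power of $\omega$ where their coefficients differ, the coefficient of $p$ is smaller. *)

From Stdlib Require Import List Arith Bool.
Import ListNotations.
Open Scope bool_scope.

Inductive X : Type :=
| num : nat -> X
| pair : X -> X -> X.

(* X_bot = option X, with None = bottom. *)
Definition Xb := option X.

Inductive code : Type :=
| Id | Zero | Succ | Pi | Delta | Left | Right
| Comp : code -> code -> code     (* Comp v u = <v (.) u> *)
| Ind  : code -> code -> code
| Prod : code -> code -> code
| It   : code -> code.

Definition is_basic (u : code) : bool :=
  match u with
  | Id | Zero | Succ | Pi | Delta | Left | Right => true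
  | _ => false
  end.

(* Action of basic symbols on X_bot (non-basic codes: bottom, never used). *)
Definition bas_apply (b : code) (x : Xb) : Xb :=
  match b, x with
  | Id, _ => x
  | Zero, Some _ => Some (num 0)
  | Succ, Some (num n) => Some (num (S n))
  | Pi, Some _ => Some (num 0)
  | Delta, Some y => Some (pair y y)
  | Left, Some (pair y _) => Some y
  | Right, Some (pair _ z) => Some z
  | _, _ => None
  end.

Fixpoint expand (u : code) (n : nat) : code :=
  match n with
  | 0 => Id
  | S m => Comp u (expand u m)
  end.

Definition is_Id (u : code) : bool := match u with Id => true | _ => false end.

Definition pairb (a b : Xb) : Xb :=
  match a, b with
  | Some y, Some z => Some (pair y z)
  | _, _ => None
  end.

Fixpoint e (u : code) (x : Xb) {struct u} : code * Xb :=
  match u with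
  | Id | Zero | Succ | Pi | Delta | Left | Right => (Id, bas_apply u x)
  | Comp v w =>
      if is_basic w then (v, bas_apply w x)
      else (Comp v (fst (e w x)), snd (e w x))
  | Prod u1 v1 =>
      match x with
      | Some (pair y z) =>
          if is_Id u1 && is_Id v1 then (Id, x)
          else (Prod (fst (e u1 (Some y))) (fst (e v1 (Some z))),
                pairb (snd (e u1 (Some y))) (snd (e v1 (Some z))))
      | _ => (Id, None)
      end
  | Ind u1 v1 =>
      match x with
      | Some z =>
          if is_Id u1 && is_Id v1 then (Id, Some (pair z z))
          else (Ind (fst (e u1 x)) (fst (e v1 x)),
                pairb (snd (e u1 x)) (snd (e v1 x)))
      | None => (Id, None)
      end
  | It w =>
      match x with
      | Some (pair y (num n)) => (expand w n, Some y)
      | _ => (Id, None)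
      end
  end.

Definition emap (u : code) (x : Xb) : code := fst (e u x).
Definition earg (u : code) (x : Xb) : Xb := snd (e u x).

(* N[omega]: polynomials with natural coefficients, represented by the list
   of coefficients [a0; a1; ...] (coefficient of omega^i at index i);
   trailing zeros are irrelevant since everything is stated via coef. *)
Definition poly := list nat.
Definition coef (p : poly) (i : nat) : nat := nth i p 0.

Fixpoint padd (p q : poly) : poly :=
  match p, q with
  | [], _ => q
  | _, [] => p
  | a :: p', b :: q' => (a + b) :: padd p' q'
  end.

Definition pconst (n : nat) : poly := [n].
Definition pmulw (p : poly) : poly := 0 :: p.

Definition peq (p q : poly) : Prop := forall i, coef p i = coef q i.

Definition plt (p q : poly) : Prop :=
  exists k, coef p k < coef q k /\ (forall j, k < j -> coef p j = coef q j).

Fixpoint c (u : code) : poly :=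
  match u with
  | Id => pconst 0
  | Zero | Succ | Pi | Delta | Left | Right => pconst 1
  | Comp v w => padd (padd (c w) (c v)) (pconst 1)
  | Ind u1 v1 => padd (padd (c u1) (c v1)) (pconst 1)
  | Prod u1 v1 => padd (padd (c u1) (c v1)) (pconst 1)
  | It w => pmulw (padd (c w) (pconst 1))
  end.

(* The decrease of [c] along [e] follows by
   structural induction on the code: the composition and the two pairing
   constructors use additivity, iteration uses the [omega]-domination, and
   every step that produces [Id] is covered by positivity of [c]. *)

From Stdlib Require Import List Arith Lia.

Lemma coef_padd (p q : poly) (i : nat) : coef (padd p q) i = coef p i + coef q i.
Proof.
  revert q i; induction p as [|a p IH]; intros [|b q] [|i]; unfold coef in *; simpl; auto.
Qed.

Lemma coef_pconst (n i : nat) : coef (pconst n) i = match i with 0 => n | _ => 0 end.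
Proof. destruct i as [|[|i]]; reflexivity. Qed.

Lemma coef_pmulw (p : poly) (i : nat) :
  coef (pmulw p) i = match i with 0 => 0 | S j => coef p j end.
Proof. destruct i; reflexivity. Qed.

Lemma exists_leading_index (f : nat -> nat) (N : nat) :
  (forall j, N <= j -> f j = 0) -> (exists i, f i <> 0) ->
  exists d, f d <> 0 /\ forall j, d < j -> f j = 0.
Proof.
  revert f; induction N as [|N IH]; intros f Hsupp [i Hi].
  - exfalso; apply Hi, Hsupp; lia.
  - destruct (Nat.eq_dec (f N) 0) as [HN|HN].
    + apply IH; [|eauto].
      intros j Hj; destruct (Nat.eq_dec j N) as [->|]; auto; apply Hsupp; lia.
    + exists N; split; [exact HN|]; intros; apply Hsupp; lia.
Qed.

Lemma exists_leading_coef (p : poly) :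
  (exists i, coef p i <> 0) -> exists d, coef p d <> 0 /\ forall j, d < j -> coef p j = 0.
Proof.
  apply exists_leading_index with (N := length p).
  intros j Hj; unfold coef; apply nth_overflow; exact Hj.
Qed.

Definition ple (p q : poly) : Prop := peq p q \/ plt p q.

Lemma ple_refl (p : poly) : ple p p.
Proof. left; intro; reflexivity. Qed.

Lemma peq_not_plt (p q : poly) : peq p q -> ~ plt q p.
Proof. intros E [k [Hk _]]; rewrite (E k) in Hk; lia. Qed.

(* Coefficientwise domination with at least one strict coefficient is strict
   lexicographic domination: compare at the highest differing coefficient. *)
Lemma plt_of_coef_le (p q : poly) :
  (forall i, coef p i <= coef q i) -> (exists i, coef p i < coef q i) -> plt p q.
Proof.
  intros Hle [i Hi].
  destruct (exists_leading_index (fun j => coef q j - coef p j) (length q))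
    as [d [Hd Habove]].
  - intros j Hj; unfold coef at 1; rewrite nth_overflow by exact Hj; lia.
  - exists i; lia.
  - exists d; split.
    + specialize (Hle d); lia.
    + intros j Hj; specialize (Habove j Hj); specialize (Hle j); simpl in Habove; lia.
Qed.

Lemma plt_padd (p q p' q' : poly) : plt p q -> ple p' q' -> plt (padd p p') (padd q q').
Proof.
  intros [k1 [H1 H1']] [E|[k2 [H2 H2']]].
  - exists k1; rewrite !coef_padd, (E k1); split; [lia|].
    intros j Hj; rewrite !coef_padd, H1', E; auto.
  - destruct (Nat.lt_total k1 k2) as [L|[L|L]].
    + exists k2; rewrite !coef_padd, (H1' k2 L); split; [lia|].
      intros j Hj; rewrite !coef_padd, H1', H2'; auto; lia.
    + subst; exists k2; rewrite !coef_padd; split; [lia|].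
      intros j Hj; rewrite !coef_padd, H1', H2'; auto.
    + exists k1; rewrite !coef_padd, (H2' k1 L); split; [lia|].
      intros j Hj; rewrite !coef_padd, H1', H2'; auto; lia.
Qed.

Lemma plt_padd_comm (p q p' q' : poly) :
  plt (padd p p') (padd q q') -> plt (padd p' p) (padd q' q).
Proof.
  intros [k [Hk Habove]]; exists k; rewrite !coef_padd in *; split; [lia|].
  intros j Hj; specialize (Habove j Hj); rewrite !coef_padd in *; lia.
Qed.

(* The shape [a + b + 1] shared by the complexities of the three binary
   constructors decreases when one argument decreases and the other does not
   increase. *)
Lemma plt_binary (p1 q1 p2 q2 : poly) :
  (plt p1 q1 /\ ple p2 q2) \/ (ple p1 q1 /\ plt p2 q2) ->
  plt (padd (padd p1 p2) (pconst 1)) (padd (padd q1 q2) (pconst 1)).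
Proof.
  intros Hcases; apply plt_padd; [|apply ple_refl].
  destruct Hcases as [[H1 H2]|[H1 H2]].
  - apply plt_padd; assumption.
  - apply plt_padd_comm, plt_padd; assumption.
Qed.

Lemma plt_multiple_pmulw (p q : poly) (n : nat) :
  (forall i, coef p i = n * coef q i) -> (exists i, coef q i <> 0) -> plt p (pmulw q).
Proof.
  intros Hp Hq; destruct (exists_leading_coef q Hq) as [d [Hd Habove]].
  exists (S d); rewrite Hp, coef_pmulw, (Habove (S d)) by lia; split; [lia|].
  intros [|j] Hj; [lia|]; rewrite Hp, coef_pmulw, !Habove by lia; lia.
Qed.

Lemma coef_c_expand (w : code) (n i : nat) :
  coef (c (expand w n)) i = n * coef (padd (c w) (pconst 1)) i.
Proof.
  induction n as [|n IH]; simpl.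
  - rewrite coef_pconst; destruct i; reflexivity.
  - rewrite !coef_padd in *; rewrite IH; lia.
Qed.

Lemma c_nonzero (u : code) : u <> Id -> exists i, coef (c u) i <> 0.
Proof.
  destruct u; intros Hu; try congruence;
    try (exists 0; simpl; rewrite ?coef_padd, ?coef_pconst; cbn; lia).
  exists 1; simpl; rewrite coef_pmulw, coef_padd; cbn; lia.
Qed.

Lemma c_Id_plt (u : code) : u <> Id -> plt (c Id) (c u).
Proof.
  intros Hu; destruct (c_nonzero u Hu) as [i Hi].
  change (c Id) with (pconst 0); apply plt_of_coef_le.
  - intros j; rewrite coef_pconst; destruct j; lia.
  - exists i; rewrite coef_pconst; destruct i; lia.
Qed.

Lemma ple_emap_of_plt (u : code) (x : Xb) :
  (u <> Id -> plt (c (emap u x)) (c u)) -> ple (c (emap u x)) (c u).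
Proof.
  destruct u; intros H; try (right; apply H; discriminate).
  apply ple_refl.
Qed.

Lemma is_Id_false (u : code) : is_Id u = false -> u <> Id.
Proof. intros H ->; discriminate. Qed.

Lemma plt_binary_step (u1 u2 : code) (x1 x2 : Xb) :
  (u1 <> Id -> plt (c (emap u1 x1)) (c u1)) ->
  (u2 <> Id -> plt (c (emap u2 x2)) (c u2)) ->
  is_Id u1 && is_Id u2 = false ->
  plt (padd (padd (c (emap u1 x1)) (c (emap u2 x2))) (pconst 1))
      (padd (padd (c u1) (c u2)) (pconst 1)).
Proof.
  intros H1 H2 Hnot; apply plt_binary.
  destruct (is_Id u1) eqn:E1.
  - right; split; [apply ple_emap_of_plt, H1|apply H2, is_Id_false, Hnot].
  - left; split; [apply H1, is_Id_false, E1|apply ple_emap_of_plt, H2].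
Qed.

Lemma c_emap_plt (u : code) (x : Xb) : u <> Id -> plt (c (emap u x)) (c u).
Proof.
  revert x; induction u as [| | | | | | |v IHv w IHw|u1 IH1 u2 IH2|u1 IH1 u2 IH2|w IHw];
    intros x Hu; try congruence; try (exact (c_Id_plt _ Hu));
    unfold emap; simpl.
  -
    destruct (is_basic w) eqn:Hbasic; simpl.
    + apply plt_of_coef_le.
      * intros i; rewrite !coef_padd; lia.
      * exists 0; rewrite !coef_padd, coef_pconst; lia.
    + apply plt_binary; left; split; [apply IHw|apply ple_refl].
      intros ->; discriminate Hbasic.
  -
    destruct x as [z|]; [|exact (c_Id_plt _ Hu)].
    destruct (is_Id u1 && is_Id u2) eqn:Hnot; [exact (c_Id_plt _ Hu)|].
    apply plt_binary_step; [apply IH1|apply IH2|exact Hnot].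
  -
    destruct x as [[n|y z]|]; try (exact (c_Id_plt _ Hu)).
    destruct (is_Id u1 && is_Id u2) eqn:Hnot; [exact (c_Id_plt _ Hu)|].
    apply plt_binary_step; [apply IH1|apply IH2|exact Hnot].
  -
    destruct x as [[n|y [n|a b]]|]; try (exact (c_Id_plt _ Hu)).
    apply plt_multiple_pmulw with (n := n); [apply coef_c_expand|].
    exists 0; rewrite coef_padd, coef_pconst; lia.
Qed.

Theorem mainTheorem9 (u : code) (x : Xb) :
  (plt (pconst 0) (c u) -> plt (c (emap u x)) (c u)) /\
  ((peq (c u) (pconst 0) <-> u = Id) /\ (u = Id -> e u x = (u, x))).
Proof.
  split; [|split; [split|]].
  - intros Hpos; apply c_emap_plt; intros ->.
    exact (peq_not_plt _ _ (fun i => eq_refl) Hpos).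
  - intros Hzero; destruct u; try reflexivity;
      exfalso; apply (peq_not_plt _ _ Hzero), c_Id_plt; discriminate.
  - intros ->; intro; reflexivity.
  - intros ->; reflexivity.
Qed.
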